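(* Let $0<\epsilon<1$ and let $\bar b,\bar w$ satisfy $b/2\le\bar b\le 2b$ and $w/6\le\bar w\le 6w$. Let $(P_H,P_L)$ be any appropriate partition of $E$ with respect to $\bar b,\bar w,\epsilon$. Let $c>0$ and $s\ge c\cdot m\log(n/\epsilon^2)/(\bar b^{1/4}\epsilon^{9/4})$, let $e_1,\dots,e_s$ be edges drawn independently and uniformly at random from $E$, $S=\{e_1,\dots,e_s\}$, and $Y=\frac1s\sum_{i=1}^s\mathrm{wt}_{P_L}(e_i)$. Then $$b(1-c_H\epsilon)\le m\,\mathbb{E}[Y]\le b.$$ Moreover, if the constant $c$ is large enough (namely $c>1/(2(1-c_H\epsilon))$), then $$\Pr\left[mY<b(1-2c_H\epsilon)\right]<\frac{\epsilon^2}{n}.$$ Here $c_H=1.77\times10^4$.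
   Context: Let $G=(V,E)$ be a bipartite graph with bipartition $V=U\cup L$, $n=|V|$, $m=|E|$; $d_v$ is the degree of $v$; for $e=(u,v)$, $d_e=d_u+d_v-2$; $w$ is the number of wedges (paths with two edges). A butterfly is a set of four distinct vertices $\{u_1,u_2,v_1,v_2\}$, $u_i\in U$, $v_i\in L$, with all four pairs $u_iv_j$ edges; $b$ is the number of butterflies and $b(e)$ the number containing edge $e$. For nonempty $P_L\subseteq E$ and a butterfly $B$: $\mathrm{wt}_{P_L}(B)=0$ if none of its edges is in $P_L$, and $1/\ell$ if exactly $\ell>0$ of its edges are in $P_L$; for an edge $e$, $\mathrm{wt}_{P_L}(e)=0$ if $e\notin P_L$ and $\mathrm{wt}_{P_L}(e)=\sum_{B\ni e}\mathrm{wt}_{P_L}(B)$ otherwise. Given $\bar b,\bar w,\epsilon$, an edge $e$ is heavy if $b(e)>2\bar b^{3/4}/\epsilon^{1/4}$ or $d_e>\bar w/(\epsilon\bar b)^{1/4}$, and light if $b(e)<\bar b^{3/4}/(2\epsilon^{1/4})$ and $d_e<\bar w/(\epsilon\bar b)^{1/4}$. A partition $(P_H,P_L)$ of $E$ is appropriate if every heavy edge is in $P_H$ and every light edge in $P_L$. *)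

From HB Require Import structures.
From mathcomp Require Import all_boot all_order all_algebra.
From mathcomp Require Import reals exp.
Set Implicit Arguments. Unset Strict Implicit. Unset Printing Implicit Defensive.
Import Order.TTheory GRing.Theory Num.Theory.
Local Open Scope ring_scope.

Section Bipartite.
Variables (U L : finType) (E : {set U * L}).

Definition nverts : nat := (#|U| + #|L|)%N.
Definition nedges : nat := #|E|.

Definition nbrU (u : U) : {set L} := [set v | (u, v) \in E].
Definition nbrL (v : L) : {set U} := [set u | (u, v) \in E].
Definition degU (u : U) : nat := #|nbrU u|.
Definition degL (v : L) : nat := #|nbrL v|.

Definition edeg (e : U * L) : nat := (degU e.1 + degL e.2 - 2)%N.

(* wedges = paths with two edges: a middle vertex together with an unordered
   pair of distinct neighbours *)
Definition wedges : nat :=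
  (#|[set x : U * {set L} | (#|x.2| == 2) && (x.2 \subset nbrU x.1)]|
   + #|[set x : L * {set U} | (#|x.2| == 2) && (x.2 \subset nbrL x.1)]|)%N.

Definition butterflies : {set {set U} * {set L}} :=
  [set B : {set U} * {set L} | [&& #|B.1| == 2, #|B.2| == 2 & setX B.1 B.2 \subset E]].
Definition bedges (B : {set U} * {set L}) : {set U * L} := setX B.1 B.2.
Definition nbutterflies : nat := #|butterflies|.
Definition bfly_edge (e : U * L) : nat :=
  #|[set B in butterflies | e \in bedges B]|.

Variable R : realType.

Definition wtB (PL : {set U * L}) (B : {set U} * {set L}) : R :=
  let l := #|bedges B :&: PL| in if l == 0%N then 0 else (l%:R)^-1.

Definition wtE (PL : {set U * L}) (e : U * L) : R :=
  if e \in PL then \sum_(B in butterflies | e \in bedges B) wtB PL B else 0.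

Definition heavy (bb wb eps : R) (e : U * L) : bool :=
  ((bfly_edge e)%:R > 2 * bb `^ (3 / 4) / eps `^ (1 / 4))
  || ((edeg e)%:R > wb / (eps * bb) `^ (1 / 4)).

Definition light (bb wb eps : R) (e : U * L) : bool :=
  ((bfly_edge e)%:R < bb `^ (3 / 4) / (2 * eps `^ (1 / 4)))
  && ((edeg e)%:R < wb / (eps * bb) `^ (1 / 4)).

Definition appropriate (bb wb eps : R) (PH PL : {set U * L}) : Prop :=
  [/\ PH :|: PL = E, PH :&: PL = set0,
      (forall e, e \in E -> heavy bb wb eps e -> e \in PH) &
      (forall e, e \in E -> light bb wb eps e -> e \in PL)].

(* sample space: s independent uniform draws from E, i.e. the uniform
   distribution on E^s *)
Definition samples (s : nat) : {set {ffun 'I_s -> U * L}} :=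
  [set t : {ffun 'I_s -> U * L} | [forall i, t i \in E]].

Definition Yvar (PL : {set U * L}) (s : nat) (t : {ffun 'I_s -> U * L}) : R :=
  (s%:R)^-1 * \sum_(i < s) wtE PL (t i).

Definition expect (s : nat) (X : {ffun 'I_s -> U * L} -> R) : R :=
  (#|samples s|%:R)^-1 * \sum_(t in samples s) X t.

Definition prob (s : nat) (P : pred {ffun 'I_s -> U * L}) : R :=
  #|[set t in samples s | P t]|%:R / #|samples s|%:R.

End Bipartite.

Definition c_H {R : realType} : R := 17700%:R.

Arguments wtB {U L R} PL B.
Arguments wtE {U L} E {R} PL e.
Arguments heavy {U L} E {R} bb wb eps e.
Arguments light {U L} E {R} bb wb eps e.
Arguments appropriate {U L} E {R} bb wb eps PH PL.
Arguments Yvar {U L} E {R} PL s t.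
Arguments expect {U L} E {R} {s} X.
Arguments prob {U L} E {R} {s} P.

From HB Require Import structures.
From mathcomp Require Import all_boot all_order all_algebra.
From mathcomp Require Import reals exp sequences.
From mathcomp Require Import zify ring lra.
Import Order.TTheory GRing.Theory Num.Theory.
Local Open Scope ring_scope.
Set Implicit Arguments. Unset Strict Implicit. Unset Printing Implicit Defensive.

(* The weights spread each butterfly meeting P_L evenly over its edges in P_L, so
   m E[Y] = sum_(e in E) wt(e) counts the butterflies meeting P_L.  A butterfly missing P_L
   has four non-light edges.  With r = (eps bb)^(1/4), a non-light edge has b(e) >= bb/(2r)
   or d_e >= wb/r, and sum_e b(e) = 4b, sum_e d_e = 2w, so there are N <= 28r of them.
   A butterfly is determined by an ordered pair of opposite edges, hence at most
   N(N-1)/4 <= 3N^4/256 <= 14406 eps b butterflies miss P_L.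
   For the tail, the edges of P_L are not heavy, so every weight lies in [0, 2bb/r], and the
   multiplicative Chernoff bound Pr[sum_i X_i < (1-d) s mu] <= exp(-d^2 s mu / (4M)) for
   [0, M]-valued samples, taken with d = c_H eps / 2, is below exp(-ln(n/eps^2)) = eps^2/n
   for the given s. *)

Definition offdiag (T : finType) (A : {set T}) : {set T * T} :=
  [set p | [&& p.1 \in A, p.2 \in A & p.1 != p.2]].

Lemma card_offdiag (T : finType) (A : {set T}) : #|offdiag A| = (#|A| * #|A|.-1)%N.
Proof.
have -> : offdiag A = setX A A :\: [set (x, x) | x in A].
  apply/setP => -[x y]; rewrite !inE /=; apply/and3P/and3P => -[].
    move=> xA yA xy; split=> //; apply: contraNN xy => /imsetP[z _ [-> ->]].
    exact: eqxx.
  move=> xx xA yA; split=> //; apply: contraNneq xx => <-.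
  exact: imset_f.
rewrite cardsD cardsX (setIidPr _); last first.
  by apply/subsetP => _ /imsetP[x xA ->]; rewrite inE /= xA.
by rewrite card_imset => [|x y []]; rewrite // -subn1 mulnBr muln1.
Qed.

Lemma card2_set2 (T : finType) (A : {set T}) a c :
  #|A| = 2%N -> a \in A -> c \in A -> a != c -> [set a; c] = A.
Proof.
move=> A2 aA cA ac; apply/eqP; rewrite eqEcard cards2 ac A2 leqnn andbT.
by apply/subsetP => x; rewrite !inE => /orP[] /eqP ->.
Qed.

Lemma sum_edges_fst (U L : finType) (E : {set U * L}) (F : U -> nat) :
  (\sum_(e in E) F e.1 = \sum_u degU E u * F u)%N.
Proof.
transitivity (\sum_u \sum_v (if (u, v) \in E then F u else 0))%N.
  by rewrite pair_bigA big_mkcond; apply: eq_bigr => -[u v].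
apply: eq_bigr => u _; rewrite /degU -sum_nat_const [RHS]big_mkcond.
by apply: eq_bigr => v _; rewrite inE.
Qed.

Lemma sum_edges_snd (U L : finType) (E : {set U * L}) (F : L -> nat) :
  (\sum_(e in E) F e.2 = \sum_v degL E v * F v)%N.
Proof.
transitivity (\sum_u \sum_v (if (u, v) \in E then F v else 0))%N.
  by rewrite pair_bigA big_mkcond; apply: eq_bigr => -[u v].
rewrite exchange_big; apply: eq_bigr => v _.
rewrite /degL -sum_nat_const [RHS]big_mkcond.
by apply: eq_bigr => u _; rewrite inE.
Qed.

Lemma card_wedges_at (X Y : finType) (nbr : X -> {set Y}) :
  #|[set x : X * {set Y} | (#|x.2| == 2) && (x.2 \subset nbr x.1)]| =
  (\sum_x 'C(#|nbr x|, 2))%N.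
Proof.
set W := [set x | _].
transitivity (\sum_x \sum_(S : {set Y}) ((x, S) \in W))%N.
  by rewrite pair_bigA -sum1_card big_mkcond; apply: eq_bigr => -[x S].
apply: eq_bigr => x _; rewrite -cards_draws -sum1_card [RHS]big_mkcond.
by apply: eq_bigr => S _; rewrite !inE andbC.
Qed.

Lemma card_setIdE (T : finType) (A : {pred T}) (P : pred T) :
  #|[set x in A | P x]| = (\sum_(x in A) P x)%N.
Proof.
rewrite -sum1_card big_mkcond [RHS]big_mkcond; apply: eq_bigr => x _.
by rewrite inE; case: (x \in A).
Qed.

Lemma card_ge_mul_le_sum (R : numDomainType) (T : finType) (A : {set T}) (f : T -> R) t :
  (forall x, x \in A -> 0 <= f x) -> #|[set x in A | t <= f x]|%:R * t <= \sum_(x in A) f x.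
Proof.
move=> f_ge0; rewrite (bigID (fun x => t <= f x)) /= -[leLHS]addr0 lerD //; last first.
  by apply: sumr_ge0 => x /andP[/f_ge0].
rewrite mulr_natl -sumr_const.
rewrite [leLHS](eq_bigl (fun x => (x \in A) && (t <= f x))) => [|x]; last by rewrite inE.
by apply: ler_sum => x /andP[].
Qed.

Lemma pairs_le_quartic N : (4 <= N)%N -> (64 * (N * N.-1) <= 3 * N ^ 4)%N.
Proof. nia. Qed.

Lemma expRN_le (R : realType) (y : R) : 0 <= y -> expR (- y) <= 1 - y + y ^+ 2.
Proof.
move=> y_ge0; have y1_gt0 : 0 < 1 + y by lra.
rewrite expRN (le_trans (_ : _ <= (1 + y)^-1)) //.
  by rewrite lef_pV2 ?posrE ?expR_gt0 ?expR_ge1Dx.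
rewrite -div1r ler_pdivrMr // (_ : _ * _ = 1 + y ^+ 3); last by ring.
by rewrite lerDl exprn_ge0.
Qed.

Section Butterflies.
Variables (U L : finType) (E : {set U * L}).

Lemma card_bedges B : B \in butterflies E -> #|bedges B| = 4%N.
Proof. by rewrite inE => /and3P[/eqP B1 /eqP B2 _]; rewrite cardsX B1 B2. Qed.

Lemma bedges_sub B : B \in butterflies E -> bedges B \subset E.
Proof. by rewrite inE => /and3P[]. Qed.

Lemma edeg_edge e : e \in E -> edeg E e = ((degU E e.1).-1 + (degL E e.2).-1)%N.
Proof.
case: e => u v uvE; rewrite /edeg /=.
have : (0 < degU E u)%N by apply/card_gt0P; exists v; rewrite inE.
have : (0 < degL E v)%N by apply/card_gt0P; exists u; rewrite inE.
lia.
Qed.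

Lemma sum_edeg : (\sum_(e in E) edeg E e = 2 * wedges E)%N.
Proof.
rewrite (eq_bigr _ edeg_edge) big_split /=.
rewrite (sum_edges_fst _ (fun u => (degU E u).-1)) (sum_edges_snd _ (fun v => (degL E v).-1)).
rewrite /wedges !card_wedges_at mulnDr !big_distrr /=.
by congr (_ + _)%N; apply: eq_bigr => x _; rewrite -mul_bin_diag bin1.
Qed.

Lemma sum_bfly_edge : (\sum_(e in E) bfly_edge E e = 4 * nbutterflies E)%N.
Proof.
rewrite (eq_bigr _ (fun e _ => card_setIdE _ _)) exchange_big mulnC -sum_nat_const.
apply: eq_bigr => B Bb; rewrite -(card_bedges Bb) -card_setIdE.
apply/eq_card => e; rewrite inE andb_idl // => eB.
exact: subsetP (bedges_sub Bb) e eB.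
Qed.

Lemma wedges_gt0 : (0 < nbutterflies E)%N -> (0 < wedges E)%N.
Proof.
move=> /card_gt0P[B]; rewrite inE => /and3P[B1 B2 BE].
have /card_gt0P[u uB] : (0 < #|B.1|)%N by rewrite (eqP B1).
rewrite addn_gt0; apply/orP; left; apply/card_gt0P; exists (u, B.2).
rewrite inE /= B2; apply/subsetP => v vB; rewrite inE.
by apply: (subsetP BE); rewrite inE uB vB.
Qed.

Definition butterfly_of (p : (U * L) * (U * L)) : {set U} * {set L} :=
  ([set p.1.1; p.2.1], [set p.1.2; p.2.2]).

Lemma card_butterfly_of_fiber (NL : {set U * L}) B :
  B \in butterflies E -> bedges B \subset NL ->
  (4 <= #|[set p in offdiag NL | butterfly_of p == B]|)%N.
Proof.
move=> Bb BNL; move: (Bb); rewrite inE => /and3P[/eqP B1 /eqP B2 _].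
pose g (x : (U * U) * (L * L)) := ((x.1.1, x.2.1), (x.1.2, x.2.2)).
have g_inj : injective g by move=> [[a b] [c d]] [[a' b'] [c' d']] [-> -> -> ->].
have <- : #|g @: setX (offdiag B.1) (offdiag B.2)| = 4%N.
  by rewrite card_imset // cardsX !card_offdiag B1 B2.
apply/subset_leq_card/subsetP => p /imsetP[[[a c] [b d]]].
rewrite !inE /= => /andP[/and3P[aB cB ac] /and3P[bB dB bd]] -> {p}.
have abNL : (a, b) \in NL by apply: (subsetP BNL); rewrite inE aB bB.
have cdNL : (c, d) \in NL by apply: (subsetP BNL); rewrite inE cB dB.
rewrite abNL cdNL /butterfly_of /= (card2_set2 B1 aB cB ac) (card2_set2 B2 bB dB bd).
by rewrite -surjective_pairing eqxx andbT; apply: contra_neq ac => -[].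
Qed.

Lemma card_butterflies_within (NL : {set U * L}) :
  (4 * #|[set B in butterflies E | bedges B \subset NL]| <= #|NL| * #|NL|.-1)%N.
Proof.
set S := [set B in butterflies E | _].
rewrite -card_offdiag mulnC -sum_nat_const -sum1_card.
rewrite (partition_big butterfly_of predT) // [leqRHS](bigID (mem S)) /=.
apply: (leq_trans _ (leq_addr _ _)); apply: leq_sum => B; rewrite inE => /andP[Bb BNL].
by rewrite sum1dep_card; apply: card_butterfly_of_fiber.
Qed.

End Butterflies.

Section Weights.
Variables (R : realType) (U L : finType) (E PL : {set U * L}).

Definition avoiding : {set {set U} * {set L}} :=
  [set B in butterflies E | bedges B :&: PL == set0].

Lemma wtB_ge0 B : 0 <= wtB PL B :> R.
Proof. by rewrite /wtB; case: ifP => // _; rewrite invr_ge0 ler0n. Qed.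

Lemma wtB_le1 B : wtB PL B <= 1 :> R.
Proof. by rewrite /wtB; case: ifPn => // l0; rewrite invf_le1 ?ltr0n ?lt0n // ler1n lt0n. Qed.

Lemma mul_card_wtB B : #|bedges B :&: PL|%:R * wtB PL B = (bedges B :&: PL != set0)%:R :> R.
Proof.
rewrite /wtB -cards_eq0; case: eqP => [-> | /eqP l0]; first by rewrite mulr0.
by rewrite mulfV // pnatr_eq0.
Qed.

Lemma wtE_ge0 e : 0 <= wtE E PL e :> R.
Proof. by rewrite /wtE; case: ifP => // _; apply: sumr_ge0 => B _; apply: wtB_ge0. Qed.

Lemma wtE_le_bfly_edge e : wtE E PL e <= (bfly_edge E e)%:R :> R.
Proof.
rewrite /wtE; case: ifP => _; last by rewrite ler0n.
rewrite /bfly_edge -sum1_card natr_sum; under [X in _ <= X]eq_bigl => B do rewrite inE.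
by apply: ler_sum => B _; apply: wtB_le1.
Qed.

Lemma sum_wtE : PL \subset E ->
  \sum_(e in E) wtE E PL e = (nbutterflies E)%:R - #|avoiding|%:R :> R.
Proof.
move=> PL_E; rewrite (big_setID PL) /= (setIidPr PL_E) [X in _ + X]big1 ?addr0; last first.
  by move=> e; rewrite inE => /andP[/negbTE eNPL _]; rewrite /wtE eNPL.
under eq_bigr => e ePL do rewrite /wtE ePL.
rewrite (exchange_big_dep (mem (butterflies E))) /=; last by move=> e B _ /andP[].
rewrite /avoiding card_setIdE /nbutterflies -sum1_card !natr_sum -sumrB.
apply: eq_bigr => B Bb; rewrite (eq_bigl (fun e => e \in bedges B :&: PL)) => [|e]; last first.
  by rewrite Bb !inE andbC.
rewrite sumr_const -[LHS]mulr_natl mul_card_wtB.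
by case: (_ == set0); rewrite ?subrr ?subr0.
Qed.

Lemma Yvar_ge0 s t : 0 <= Yvar E PL s t :> R.
Proof. by rewrite mulr_ge0 ?invr_ge0 ?ler0n // sumr_ge0 // => i _; apply: wtE_ge0. Qed.

End Weights.

Section Sampling.
Variables (R : realType) (U L : finType) (E : {set U * L}).
Implicit Types (s : nat) (f : U * L -> R).
Local Notation mean f := ((\sum_(e in E) f e) / #|E|%:R).

Lemma card_samples s : #|samples E s| = (#|E| ^ s)%N.
Proof.
rewrite -[s in (_ ^ s)%N]card_ord -card_ffun_on; apply: eq_card => t.
by rewrite inE; apply/forallP/ffun_onP.
Qed.

Lemma sum_samples_prod s (g : 'I_s -> U * L -> R) :
  \sum_(t in samples E s) \prod_i g i (t i) = \prod_i \sum_(e in E) g i e.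
Proof.
rewrite bigA_distr_big; apply: eq_bigl => t; rewrite inE.
by apply/ffun_onP/forallP.
Qed.

Lemma sum_samples_coord s (i : 'I_s) f :
  \sum_(t in samples E s) f (t i) = (\sum_(e in E) f e) * #|E|%:R ^+ s.-1.
Proof.
pose g (j : 'I_s) (e : U * L) := if j == i then f e else 1.
transitivity (\sum_(t in samples E s) \prod_j g j (t j)).
  apply: eq_bigr => t _; rewrite (bigD1 i) //= big1 ?mulr1 /g ?eqxx // => j.
  by move=> /negbTE ->.
rewrite sum_samples_prod (bigD1 i) //= {1}/g eqxx; congr (_ * _).
rewrite (eq_bigr (fun _ => #|E|%:R)) => [|j /negbTE ji]; last by rewrite /g ji sumr_const.
by rewrite prodr_const cardC1 card_ord.
Qed.

Lemma expect_sample_mean s f : (0 < s)%N -> (0 < #|E|)%N ->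
  expect E (fun t : {ffun 'I_s -> U * L} => s%:R^-1 * \sum_i f (t i)) = mean f.
Proof.
move=> s_gt0 E_gt0; rewrite /expect -mulr_sumr exchange_big /=.
under eq_bigr => i _ do rewrite sum_samples_coord.
rewrite sumr_const card_ord card_samples natrX -mulr_natr.
have E_neq0 : #|E|%:R != 0 :> R by rewrite pnatr_eq0 -lt0n.
case: s s_gt0 => // s _; rewrite exprS /=; field.
by rewrite E_neq0 mul1r expf_neq0 // addrC natr1 pnatr_eq0.
Qed.

Lemma prob_eq0 s (P : pred {ffun 'I_s -> U * L}) :
  (forall t, t \in samples E s -> ~~ P t) -> prob E P = 0 :> R.
Proof.
move=> NP; rewrite /prob (_ : [set t in _ | _] = set0) ?cards0 ?mul0r //.
by apply/setP => t; rewrite [RHS]inE inE; apply/negbTE/andP => -[/NP/negP].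
Qed.

Lemma le_prob s (P Q : pred {ffun 'I_s -> U * L}) :
  (forall t, t \in samples E s -> P t -> Q t) -> prob E P <= prob E Q :> R.
Proof.
move=> PQ; rewrite /prob ler_wpM2r ?invr_ge0 ?ler0n // ler_nat.
by apply/subset_leq_card/subsetP => t; rewrite !inE => /andP[tS Pt]; rewrite tS PQ // inE.
Qed.

Lemma prob_sum_lt_le s f (a lam : R) : 0 <= lam -> (0 < #|E|)%N ->
  prob E (fun t : {ffun 'I_s -> U * L} => \sum_i f (t i) < a)
  <= expR (lam * a) * ((\sum_(e in E) expR (- lam * f e)) / #|E|%:R) ^+ s.
Proof.
move=> lam_ge0 E_gt0.
have indicator (t : {ffun 'I_s -> U * L}) :
    ((\sum_i f (t i) < a)%R : nat)%:R <= expR (lam * a) * \prod_i expR (- lam * f (t i)).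
  rewrite -expR_sum -expRD; case: ltP => [lt_a | _]; last exact: expR_ge0.
  apply: le_trans (expR_ge1Dx _); rewrite lerDl -mulr_sumr mulNr -mulrBr.
  by rewrite mulr_ge0 // subr_ge0 ltW.
rewrite /prob card_samples natrX expr_div_n mulrA ler_pM2r ?invr_gt0 ?exprn_gt0 ?ltr0n //.
rewrite card_setIdE natr_sum; apply: le_trans (ler_sum _ (fun t _ => indicator t)) _.
by rewrite -mulr_sumr (sum_samples_prod (fun _ e => expR (- lam * f e))) prodr_const card_ord.
Qed.

Lemma mean_expRN_le f (M lam : R) : 0 <= lam -> (0 < #|E|)%N ->
  (forall e, e \in E -> 0 <= f e <= M) ->
  (\sum_(e in E) expR (- lam * f e)) / #|E|%:R <= expR ((lam ^+ 2 * M - lam) * mean f).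
Proof.
move=> lam_ge0 E_gt0 f_bnd; have m_gt0 : 0 < #|E|%:R :> R by rewrite ltr0n.
apply: le_trans (expR_ge1Dx _); rewrite ler_pdivrMr //.
apply: (le_trans (y := \sum_(e in E) (1 + (lam ^+ 2 * M - lam) * f e))).
  apply: ler_sum => e /f_bnd /andP[fe_ge0 fe_le].
  rewrite mulNr (le_trans (expRN_le (mulr_ge0 lam_ge0 fe_ge0))) //.
  rewrite (_ : 1 + _ * f e = 1 - lam * f e + lam ^+ 2 * M * f e); last by ring.
  by rewrite lerD2l exprMn -mulrA ler_wpM2l ?sqr_ge0 // expr2 ler_wpM2r.
by rewrite big_split /= sumr_const -mulr_sumr [leRHS]mulrDl mul1r mulrA divfK ?lt0r_neq0.
Qed.

Lemma chernoff_lower_tail s f (M delta : R) :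
  (0 < #|E|)%N -> 0 < M -> 0 <= delta -> (forall e, e \in E -> 0 <= f e <= M) ->
  prob E (fun t : {ffun 'I_s -> U * L} => \sum_i f (t i) < (1 - delta) * s%:R * mean f)
  <= expR (- (delta ^+ 2 * s%:R * mean f / (4 * M))).
Proof.
move=> E_gt0 M_gt0 delta_ge0 f_bnd.
have lam_ge0 : 0 <= delta / (2 * M) by rewrite divr_ge0 // mulr_ge0 // ltW.
apply: le_trans (prob_sum_lt_le _ _ _ lam_ge0 E_gt0) _.
have mean_le := mean_expRN_le (M := M) lam_ge0 E_gt0 f_bnd.
apply: le_trans (ler_wpM2l (expR_ge0 _) (lerXn2r _ _ _ mean_le)) _.
- by rewrite nnegrE divr_ge0 ?ler0n // sumr_ge0 // => e _; apply: expR_ge0.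
- exact: expR_ge0.
rewrite -expRM_natl -expRD ler_expR le_eqVlt; apply/orP; left; apply/eqP.
by field; rewrite lt0r_neq0 // pnatr_eq0 -lt0n.
Qed.

End Sampling.

Lemma expect_Yvar (R : realType) (U L : finType) (E PL : {set U * L}) s :
  (0 < s)%N -> (0 < #|E|)%N ->
  #|E|%:R * expect E (Yvar E PL s) = \sum_(e in E) wtE E PL e :> R.
Proof.
move=> s_gt0 E_gt0.
have -> : expect E (Yvar E PL s) = (\sum_(e in E) wtE E PL e) / #|E|%:R :=
  expect_sample_mean (wtE E PL) s_gt0 E_gt0.
by rewrite mulrC divfK // pnatr_eq0 -lt0n.
Qed.

Section Thresholds.
Variable R : realType.
Implicit Types x y : R.

Lemma powR14_expn4 x : 0 <= x -> (x `^ (1/4)) ^+ 4 = x.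
Proof.
move=> x_ge0; rewrite -powR_mulrn ?powR_ge0 // -powRrM.
by rewrite (_ : 1 / 4 * 4%:R = 1) ?powRr1 // div1r mulVf // pnatr_eq0.
Qed.

Lemma powR34_divE x y : 0 < x -> 0 < y -> y `^ (3/4) / x `^ (1/4) = y / (x * y) `^ (1/4).
Proof.
move=> x_gt0 y_gt0.
have y_split : y `^ (3/4) * y `^ (1/4) = y.
  rewrite -powRD ?lt0r_neq0 ?implybT // (_ : 3/4 + 1/4 = 1 :> R) ?powRr1 ?ltW //.
  by field.
rewrite powRM ?ltW // -{2}y_split; field.
by rewrite !lt0r_neq0 ?powR_gt0.
Qed.

Lemma light_thresholdE x y : 0 < x -> 0 < y ->
  y `^ (3/4) / (2 * x `^ (1/4)) = y / (2 * (x * y) `^ (1/4)).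
Proof. by move=> x_gt0 y_gt0; rewrite !invfM !mulrA !(mulrC _ 2^-1) -!mulrA powR34_divE. Qed.

Lemma heavy_thresholdE x y : 0 < x -> 0 < y ->
  2 * y `^ (3/4) / x `^ (1/4) = 2 * y / (x * y) `^ (1/4).
Proof. by move=> x_gt0 y_gt0; rewrite -!mulrA powR34_divE. Qed.

Lemma powR94E x y : 0 < x -> 0 <= y ->
  y `^ (1/4) * x `^ (9/4) = (x * y) `^ (1/4) * x ^+ 2.
Proof.
move=> x_gt0 y_ge0.
have x94 : x `^ (9/4) = x ^+ 2 * x `^ (1/4).
  rewrite -powR_mulrn ?ltW // -powRD ?lt0r_neq0 ?implybT //.
  by congr (_ `^ _); field.
by rewrite x94 powRM ?(ltW x_gt0) //; ring.
Qed.

End Thresholds.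

Section AvoidingButterflies.
Variables (R : realType) (U L : finType) (E PL : {set U * L}) (eps bb wb : R).
Local Notation b := (nbutterflies E)%:R.
Local Notation r := ((eps * bb) `^ (1/4)).
Local Notation NL := [set e in E | ~~ light E bb wb eps e].

Lemma avoiding_sub_nonlight :
  (forall e, e \in E -> light E bb wb eps e -> e \in PL) ->
  avoiding E PL \subset [set B in butterflies E | bedges B \subset NL].
Proof.
move=> light_PL; apply/subsetP => B; rewrite /avoiding inE => /andP[Bb /eqP BPL].
rewrite inE Bb; apply/subsetP => e eB; have eE := subsetP (bedges_sub Bb) e eB.
rewrite inE eE; apply/negP => /(light_PL e eE) ePL.
have : e \in bedges B :&: PL by rewrite inE eB.
by rewrite BPL inE.
Qed.

Lemma card_nonlight_le : 0 < eps -> b / 2 <= bb -> (wedges E)%:R / 6 <= wb ->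
  0 < b :> R -> #|NL|%:R <= 28 * r.
Proof.
move=> eps_gt0 bb_lb wb_lb b_gt0; have bb_gt0 : 0 < bb by lra.
have r_gt0 : 0 < r by rewrite powR_gt0 ?mulr_gt0.
have wb_gt0 : 0 < wb.
  have : 0 < (wedges E)%:R :> R by rewrite ltr0n wedges_gt0 // -(ltr0n R).
  lra.
set NL1 := [set e in E | bb / (2 * r) <= (bfly_edge E e)%:R].
set NL2 := [set e in E | wb / r <= (edeg E e)%:R].
have NL_sub : NL \subset NL1 :|: NL2.
  apply/subsetP => e; rewrite !inE /light light_thresholdE // negb_and -!leNgt.
  by case/andP=> -> /=.
have NL1_le : #|NL1|%:R <= 16 * r.
  have := @card_ge_mul_le_sum R _ E (fun e => (bfly_edge E e)%:R) (bb / (2 * r))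
    (fun e _ => ler0n _ _).
  rewrite -natr_sum sum_bfly_edge natrM => NL1_bnd.
  rewrite -(ler_pM2r (divr_gt0 bb_gt0 (mulr_gt0 (ltr0Sn _ 1) r_gt0))).
  apply: le_trans NL1_bnd _; rewrite (_ : 16 * r * _ = 8 * bb); first lra.
  by field; rewrite lt0r_neq0.
have NL2_le : #|NL2|%:R <= 12 * r.
  have := @card_ge_mul_le_sum R _ E (fun e => (edeg E e)%:R) (wb / r) (fun e _ => ler0n _ _).
  rewrite -natr_sum sum_edeg natrM => NL2_bnd.
  rewrite -(ler_pM2r (divr_gt0 wb_gt0 r_gt0)); apply: le_trans NL2_bnd _.
  rewrite (_ : 12 * r * _ = 12 * wb); first lra.
  by field; rewrite lt0r_neq0.
apply: le_trans (_ : _ <= #|NL1|%:R + #|NL2|%:R) _; last by lra.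
by rewrite -natrD ler_nat (leq_trans (subset_leq_card NL_sub)) ?cardsU ?leq_subr.
Qed.

(* 14406 = 6 * 28^4 / 256 *)
Lemma card_avoiding_le : 0 < eps -> b / 2 <= bb -> bb <= 2 * b ->
  (wedges E)%:R / 6 <= wb -> (forall e, e \in E -> light E bb wb eps e -> e \in PL) ->
  #|avoiding E PL|%:R <= 14406 * eps * b.
Proof.
move=> eps_gt0 bb_lb bb_ub wb_lb /avoiding_sub_nonlight avoid_sub.
have [-> | /card_gt0P[B BX]] := posnP #|avoiding E PL|.
  by rewrite !mulr_ge0 ?ler0n // ltW.
move: (subsetP avoid_sub B BX); rewrite inE => /andP[Bb BNL].
have b_gt0 : 0 < b :> R by rewrite ltr0n; apply/card_gt0P; exists B.
have bb_gt0 : 0 < bb by lra.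
have X_le : 256 * #|avoiding E PL|%:R <= 3 * #|NL|%:R ^+ 4 :> R.
  rewrite -natrX -!natrM ler_nat.
  have N_ge4 : (4 <= #|NL|)%N by rewrite -(card_bedges Bb) subset_leq_card.
  apply: leq_trans (pairs_le_quartic N_ge4); rewrite (_ : 256 = 64 * 4)%N // -mulnA leq_mul2l /=.
  apply: leq_trans (card_butterflies_within E NL); rewrite leq_mul2l /=.
  exact: subset_leq_card avoid_sub.
have N4_le : #|NL|%:R ^+ 4 <= 28 ^+ 4 * (eps * bb) :> R.
  rewrite -(powR14_expn4 (mulr_ge0 (ltW eps_gt0) (ltW bb_gt0))) -exprMn.
  by rewrite lerXn2r ?nnegrE ?ler0n ?mulr_ge0 ?powR_ge0 // card_nonlight_le.
have : 28 ^+ 4 * (eps * bb) <= 28 ^+ 4 * (eps * (2 * b)) :> R.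
  by rewrite ler_wpM2l ?exprn_ge0 // ler_wpM2l // ltW.
lra.
Qed.

Lemma sum_wtE_bounds (k : R) : 14406 <= k -> 0 < eps -> b / 2 <= bb -> bb <= 2 * b ->
  (wedges E)%:R / 6 <= wb -> (forall e, e \in E -> light E bb wb eps e -> e \in PL) ->
  PL \subset E -> b * (1 - k * eps) <= (\sum_(e in E) wtE E PL e : R) <= b.
Proof.
move=> k_ge eps_gt0 bb_lb bb_ub wb_lb light_PL PL_sub; rewrite sum_wtE //.
rewrite lerBlDr lerDl ler0n andbT mulrBr mulr1 lerD2l lerN2 mulrC.
apply: le_trans (card_avoiding_le eps_gt0 bb_lb bb_ub wb_lb light_PL) _.
by rewrite ler_wpM2r ?ler0n // ler_wpM2r // ltW.
Qed.

End AvoidingButterflies.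

Lemma wtE_le_nonheavy (R : realType) (U L : finType) (E PL : {set U * L}) (eps bb wb : R) e :
  0 < eps -> 0 < bb -> ~~ heavy E bb wb eps e -> wtE E PL e <= 2 * bb / (eps * bb) `^ (1/4).
Proof.
move=> eps_gt0 bb_gt0; rewrite /heavy negb_or -leNgt heavy_thresholdE // => /andP[bfly_le _].
exact: le_trans (wtE_le_bfly_edge R E PL e) bfly_le.
Qed.

Lemma sample_size_gt0 (R : realType) (c m l eps bb : R) (s : nat) :
  0 < c -> 0 < m -> 0 < l -> 0 < eps -> 0 < bb ->
  c * m * l / ((eps * bb) `^ (1/4) * eps ^+ 2) <= s%:R -> (0 < s)%N.
Proof.
move=> c_gt0 m_gt0 l_gt0 eps_gt0 bb_gt0 s_ge; rewrite -(ltr0n R) (lt_le_trans _ s_ge) //.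
by rewrite divr_gt0 ?mulr_gt0 ?powR_gt0 ?mulr_gt0 ?exprn_gt0.
Qed.

Lemma chernoff_exponent_gt (R : realType) (k c l eps bb b W m s r : R) :
  128 <= k ^+ 2 -> 0 < eps -> k * eps < 1 / 2 -> 0 < l -> 0 < m -> 0 < bb -> 0 < r ->
  bb <= 2 * b -> b * (1 - k * eps) <= W -> 1 / (2 * (1 - k * eps)) < c ->
  c * m * l / (r * eps ^+ 2) <= s ->
  l < (k * eps / 2) ^+ 2 * s * (W / m) / (4 * (2 * bb / r)).
Proof.
move=> k2_ge eps_gt0 ke_lt l_gt0 m_gt0 bb_gt0 r_gt0 bb_ub W_ge c_gt s_ge.
have C_gt : 1 < c * (2 * (1 - k * eps)) by rewrite -ltr_pdivrMr; [exact: c_gt | lra].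
have c_gt0 : 0 < c by apply: le_lt_trans _ c_gt; apply: divr_ge0; lra.
have A_ge : c * l <= s * r * eps ^+ 2 / m.
  move: s_ge; rewrite ler_pdivrMr ?mulr_gt0 ?exprn_gt0 // ler_pdivlMr //; lra.
have B_ge : (1 - k * eps) / 2 <= W / bb.
  rewrite ler_pdivlMr //; have : (1 - k * eps) / 2 * bb <= (1 - k * eps) / 2 * (2 * b).
    by rewrite ler_wpM2l //; lra.
  lra.
have AB_gt : l / 4 < (s * r * eps ^+ 2 / m) * (W / bb).
  have cl_ge0 : 0 <= c * l by rewrite mulr_ge0 // ltW.
  have h_ge0 : 0 <= (1 - k * eps) / 2 by lra.
  apply: lt_le_trans (ler_pM cl_ge0 h_ge0 A_ge B_ge).
  have : 0 < l * (c * (2 * (1 - k * eps)) - 1) by rewrite mulr_gt0 // subr_gt0.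
  lra.
rewrite (_ : _ / (4 * _) = k ^+ 2 / 32 * ((s * r * eps ^+ 2 / m) * (W / bb))); last first.
  by field; rewrite !lt0r_neq0.
apply: lt_le_trans (_ : l < 4 * ((s * r * eps ^+ 2 / m) * (W / bb))) _; first lra.
by rewrite ler_wpM2r; lra.
Qed.

Section LowerTail.
Variables (R : realType) (U L : finType) (E PL : {set U * L}) (s : nat) (eps bb wb k c l : R).
Local Notation b := (nbutterflies E)%:R.
Local Notation m := #|E|%:R.
Local Notation r := ((eps * bb) `^ (1/4)).
Local Notation W := (\sum_(e in E) wtE E PL e).

Lemma Yvar_lower_tail : 0 <= k -> 128 <= k ^+ 2 ->
  (0 < #|E|)%N -> 0 < eps -> b / 2 <= bb -> bb <= 2 * b ->
  (forall e, e \in PL -> ~~ heavy E bb wb eps e) -> b * (1 - k * eps) <= W ->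
  1 / (2 * (1 - k * eps)) < c -> 0 < l -> c * m * l / (r * eps ^+ 2) <= s%:R ->
  prob E (fun t : {ffun 'I_s -> U * L} => m * Yvar E PL s t < b * (1 - 2 * k * eps))
  < expR (- l) :> R.
Proof.
move=> k_ge0 k2_ge E_gt0 eps_gt0 bb_lb bb_ub PL_nonheavy W_ge c_gt l_gt0 s_ge.
have m_gt0 : 0 < m :> R by rewrite ltr0n.
have [Bt_le0 | Bt_gt0] := lerP (b * (1 - 2 * k * eps)) 0.
  rewrite prob_eq0 ?expR_gt0 // => t _; rewrite -leNgt (le_trans Bt_le0) //.
  by rewrite mulr_ge0 ?ler0n ?Yvar_ge0.
have b_gt0 : 0 < b :> R.
  by rewrite lt0r ler0n andbT; apply: contraTneq Bt_gt0 => ->; rewrite mul0r ltxx.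
have ke_lt : k * eps < 1 / 2 by move: Bt_gt0; rewrite pmulr_rgt0 // => ?; lra.
have bb_gt0 : 0 < bb by lra.
have ke_ge0 : 0 <= k * eps by rewrite mulr_ge0 // ltW.
have r_gt0 : 0 < r by rewrite powR_gt0 ?mulr_gt0.
have M_gt0 : 0 < 2 * bb / r by rewrite divr_gt0 ?mulr_gt0.
have c_gt0 : 0 < c by apply: le_lt_trans _ c_gt; apply: divr_ge0; lra.
have s_gt0 : 0 < s%:R :> R by rewrite ltr0n (sample_size_gt0 c_gt0 m_gt0 l_gt0 eps_gt0 bb_gt0 s_ge).
have wt_bnd e : e \in E -> 0 <= (wtE E PL e : R) <= 2 * bb / r.
  move=> _; rewrite wtE_ge0 /=; have [/PL_nonheavy | ePL] := boolP (e \in PL).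
    exact: wtE_le_nonheavy.
  by rewrite /wtE (negbTE ePL) ltW.
set delta := k * eps / 2.
have delta_ge0 : 0 <= delta by rewrite divr_ge0 ?mulr_ge0 // ltW.
apply: le_lt_trans (le_prob R (Q := fun t : {ffun 'I_s -> U * L} =>
  \sum_i wtE E PL (t i) < (1 - delta) * s%:R * (W / m)) _) _.
  move=> t _; rewrite /Yvar mulrA => Y_lt.
  rewrite -(ltr_pM2l (divr_gt0 m_gt0 s_gt0)) (_ : _ * (_ * _ * _) = (1 - delta) * W); last first.
    by field; rewrite !lt0r_neq0.
  apply: (lt_le_trans Y_lt).
  (* (1 - k eps / 2) (1 - k eps) >= 1 - 2 k eps *)
  have := mulr_ge0 (mulr_ge0 (ler0n R (nbutterflies E)) ke_ge0) (addr_ge0 ler01 ke_ge0).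
  have : (1 - delta) * (b * (1 - k * eps)) <= (1 - delta) * W by rewrite ler_wpM2l // /delta; lra.
  rewrite /delta; lra.
apply: le_lt_trans (chernoff_lower_tail s E_gt0 M_gt0 delta_ge0 wt_bnd) _.
rewrite ltr_expR ltrN2.
exact: chernoff_exponent_gt k2_ge eps_gt0 ke_lt l_gt0 m_gt0 bb_gt0 r_gt0 bb_ub W_ge c_gt s_ge.
Qed.

End LowerTail.

Lemma c_H_ge (R : realType) : 14406 <= c_H :> R.
Proof. rewrite /c_H; lra. Qed.

Theorem Yvar_mean_and_lower_tail (R : realType) (U L : finType) (E : {set U * L})
    (eps bb wb c k : R) (PH PL : {set U * L}) (s : nat) :
  14406 <= k -> (0 < #|E|)%N ->
  0 < eps < 1 ->
  (nbutterflies E)%:R / 2 <= bb <= 2 * (nbutterflies E)%:R ->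
  (wedges E)%:R / 6 <= wb <= 6 * (wedges E)%:R ->
  appropriate E bb wb eps PH PL ->
  0 < c ->
  c * (nedges E)%:R * ln ((nverts U L)%:R / eps ^+ 2)
    / (bb `^ (1 / 4) * eps `^ (9 / 4)) <= s%:R ->
  let b := (nbutterflies E)%:R : R in
  let m := (nedges E)%:R : R in
  (b * (1 - k * eps) <= m * expect E (Yvar E PL s)
   /\ m * expect E (Yvar E PL s) <= b)
  /\ (c > 1 / (2 * (1 - k * eps)) ->
      prob E (fun t : {ffun 'I_s -> U * L} => m * Yvar E PL s t < b * (1 - 2 * k * eps))
        < eps ^+ 2 / (nverts U L)%:R).
Proof.
move=> k_ge; have [k_ge0 k2_ge] : 0 <= k /\ 128 <= k ^+ 2 by split; [lra | rewrite expr2; nra].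
move=> E_gt0 /andP[eps_gt0 eps_lt1] /andP[bb_lb bb_ub] /andP[wb_lb _].
move=> [PH_U_PL PH_I_PL heavy_PH light_PL] c_gt0 s_ge b m; rewrite {}/b {}/m /nedges.
have PL_sub : PL \subset E by rewrite -PH_U_PL subsetUr.
have PL_nonheavy e : e \in PL -> ~~ heavy E bb wb eps e.
  move=> ePL; apply/negP => /(heavy_PH e (subsetP PL_sub e ePL)) ePH.
  have : e \in PH :&: PL by rewrite inE ePH ePL.
  by rewrite PH_I_PL inE.
have /andP[W_ge W_le] := sum_wtE_bounds k_ge eps_gt0 bb_lb bb_ub wb_lb light_PL PL_sub.
have m_gt0 : 0 < #|E|%:R :> R by rewrite ltr0n.
have n_gt0 : 0 < (nverts U L)%:R :> R.
  case/card_gt0P: E_gt0 => e _; rewrite ltr0n addn_gt0; apply/orP; left.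
  by apply/card_gt0P; exists e.1.
have l_gt0 : 0 < ln ((nverts U L)%:R / eps ^+ 2).
  rewrite ln_gt0 // ltr_pdivlMr ?exprn_gt0 // mul1r.
  apply: lt_le_trans (_ : eps ^+ 2 < 1) _; first by rewrite exprn_ilt1 ?ltW.
  by rewrite ler1n -(ltr0n R).
rewrite powR94E // in s_ge; last by apply: le_trans bb_lb; rewrite divr_ge0 ?ler0n.
(* With no samples Y = 0^-1 * 0 = 0, and the bound on s forces b = 0. *)
have [s0 | s_gt0] := posnP s.
  have b0 : (nbutterflies E)%:R = 0 :> R.
    apply/le_anti; rewrite ler0n andbT leNgt; apply/negP => b_gt0.
    have bb_gt0 : 0 < bb by lra.
    by move: (sample_size_gt0 c_gt0 m_gt0 l_gt0 eps_gt0 bb_gt0 s_ge); rewrite s0.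
  subst s; rewrite b0 !mul0r /expect big1 ?mulr0 => [|t _]; last by rewrite /Yvar big_ord0 mulr0.
  split=> // _; rewrite prob_eq0 ?divr_gt0 ?exprn_gt0 // => t _.
  by rewrite -leNgt mulr_ge0 ?ler0n ?Yvar_ge0.
rewrite expect_Yvar //; split=> // c_gt.
have -> : eps ^+ 2 / (nverts U L)%:R = expR (- ln ((nverts U L)%:R / eps ^+ 2)).
  by rewrite expRN lnK ?invf_div // posrE divr_gt0 ?exprn_gt0.
exact: (Yvar_lower_tail k_ge0 k2_ge E_gt0 eps_gt0 bb_lb bb_ub PL_nonheavy W_ge c_gt l_gt0 s_ge).
Qed.

Theorem lemma11 (R : realType) (U L : finType) (E : {set U * L})
    (eps bb wb c : R) (PH PL : {set U * L}) (s : nat) :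
  (0 < #|E|)%N ->
  0 < eps < 1 ->
  (nbutterflies E)%:R / 2 <= bb <= 2 * (nbutterflies E)%:R ->
  (wedges E)%:R / 6 <= wb <= 6 * (wedges E)%:R ->
  appropriate E bb wb eps PH PL ->
  PL != set0 ->
  0 < c ->
  c * (nedges E)%:R * ln ((nverts U L)%:R / eps ^+ 2)
    / (bb `^ (1 / 4) * eps `^ (9 / 4)) <= s%:R ->
  let b := (nbutterflies E)%:R : R in
  let m := (nedges E)%:R : R in
  (b * (1 - c_H * eps) <= m * expect E (Yvar E PL s)
   /\ m * expect E (Yvar E PL s) <= b)
  /\ (c > 1 / (2 * (1 - c_H * eps)) ->
      prob E (fun t : {ffun 'I_s -> U * L} => m * Yvar E PL s t < b * (1 - 2 * c_H * eps))
        < eps ^+ 2 / (nverts U L)%:R).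
Proof.
(* wtE is defined for every PL. *)
move=> E_gt0 eps_I bb_I wb_I PHPL_appropriate _.
exact: Yvar_mean_and_lower_tail (c_H_ge R) E_gt0 eps_I bb_I wb_I PHPL_appropriate.
Qed.
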